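(* Let $G$ be a finite group with pairwise non-isomorphic irreducible complex representations $(V_1,\rho_1),\dots,(V_k,\rho_k)$, let $X$ be a $G$-homogeneous space (finite set with transitive $G$-action), let $Q$ be a probability distribution on $G$ and $q:=\sum_{g\in G}Q(g)e_g\in\mathbb{C}G$. Then for every positive integer $N$ there exist $r,s\in X$ such that \[\|q^N\cdot e_{r}-\overline{u}\|_{\rm TV}^2\leq \frac{1}{4}\sum_{V_j\neq {\rm triv}} m(V_j, \mathbb{C} X) \|\hat{Q}(\rho_j)^N\|_{\rm Fb}^2\] and \[\|q^N\cdot e_{s}-\overline{u}\|_{\rm TV}^2\geq \frac{1}{4|X|}\sum_{V_j\neq {\rm triv}} m(V_j, \mathbb{C} X) \|\hat{Q}(\rho_j)^N\|_{\rm Fb}^2,\] the sums running over the nontrivial irreducible representations.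
   Context: $\mathbb{C}G$ is the group algebra with basis $\{e_g\}$ and product $e_ge_h=e_{gh}$; $q^N$ is the $N$-th power in $\mathbb{C}G$. $\mathbb{C}X$ has basis $\{e_x:x\in X\}$ and is a $\mathbb{C}G$-module via $e_g\cdot e_x:=e_{g(x)}$. For $h=\sum_x h(x)e_x$, $\|h\|_{\rm TV}:=\frac12\sum_x|h(x)|$; $\overline{u}:=\frac{1}{|X|}\sum_x e_x$. $m(V_j,\mathbb{C}X)$ is the multiplicity of $V_j$ in $\mathbb{C}X$. With a fixed orthonormal basis $B_j$ of $V_j$ for a $G$-invariant inner product, $\hat{Q}(\rho_j):=\sum_g Q(g)[\rho_j(g)]_{B_j}$, and $\|A\|_{\rm Fb}^2:={\rm Tr}(AA^* )$. *)

From HB Require Import structures.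
From mathcomp Require Import all_boot all_order all_fingroup all_algebra all_solvable all_field all_character.
From Stdlib Require Import ClassicalEpsilon.
Set Implicit Arguments. Unset Strict Implicit. Unset Printing Implicit Defensive.
Import Order.TTheory GRing.Theory Num.Theory.
Local Open Scope ring_scope.

Record lact (gT : finGroupType) (X : finType) := Lact {
  lact_fun :> gT -> X -> X;
  lact1 : forall x, lact_fun 1%g x = x;
  lactM : forall g h x, lact_fun (g * h)%g x = lact_fun g (lact_fun h x) }.

Definition lact_transitive (gT : finGroupType) (X : finType) (A : lact gT X) :=
  forall x y : X, exists g : gT, A g x = y.

(* The group algebra CG, elements = coefficient functions g |-> a(g) *)
Definition ga_one (gT : finGroupType) : gT -> algC := fun g => (g == 1%g)%:R.
Definition ga_mul (gT : finGroupType) (a b : gT -> algC) : gT -> algC :=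
  fun k => \sum_(g : gT) \sum_(h : gT) (a g * b h) *+ ((g * h)%g == k).
Fixpoint ga_pow (gT : finGroupType) (a : gT -> algC) (N : nat) : gT -> algC :=
  match N with 0 => @ga_one gT | N'.+1 => ga_mul (ga_pow a N') a end.

(* the CG-module CX: e_g . e_x = e_{g(x)} *)
Definition cx_basis (X : finType) (x : X) : X -> algC := fun y => (y == x)%:R.
Definition ga_act (gT : finGroupType) (X : finType) (A : lact gT X)
  (a : gT -> algC) (h : X -> algC) : X -> algC :=
  fun y => \sum_(g : gT) \sum_(x : X) (a g * h x) *+ (A g x == y).
Definition cx_unif (X : finType) : X -> algC := fun _ => (#|X|%:R)^-1.
Definition cx_sub (X : finType) (h1 h2 : X -> algC) : X -> algC := fun x => h1 x - h2 x.
Definition tv_norm (X : finType) (h : X -> algC) : algC := 2^-1 * \sum_(x : X) `|h x|.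

(* permutation representation of G on CX, in the basis (e_x), x = enum_val i *)
Definition perm_mx (gT : finGroupType) (X : finType) (A : lact gT X) (g : gT)
  : 'M[algC]_#|X| :=
  \matrix_(i, j) (A g (enum_val j) == enum_val i)%:R.

Lemma perm_mx_repr (gT : finGroupType) (X : finType) (A : lact gT X) :
  mx_repr [set: gT] (perm_mx A).
Proof.
split.
  apply/matrixP=> i j; rewrite !mxE lact1 (inj_eq enum_val_inj) eq_sym //.
move=> g h _ _; apply/matrixP=> i j; rewrite !mxE lactM.
rewrite (bigD1 (enum_rank (A h (enum_val j)))) //= big1 ?addr0.
  by rewrite !mxE enum_rankK eqxx mulr1.
move=> k /negbTE nk; rewrite !mxE.
have [e|ne] := eqVneq (A h (enum_val j)) (enum_val k); last by rewrite mulr0.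
by move: nk; rewrite e enum_valK eqxx.
Qed.

Definition perm_repr (gT : finGroupType) (X : finType) (A : lact gT X)
  : mx_representation algC [set: gT]%G #|X| := MxRepresentation (perm_mx_repr A).

Lemma triv_mx_repr (gT : finGroupType) :
  mx_repr [set: gT] (fun _ : gT => (1%:M : 'M[algC]_1)).
Proof. by split=> // g h _ _; rewrite mul1mx. Qed.
Definition triv_repr (gT : finGroupType) : mx_representation algC [set: gT]%G 1 :=
  MxRepresentation (triv_mx_repr gT).

Definition is_triv (gT : finGroupType) n (r : mx_representation algC [set: gT]%G n)
  : bool := if excluded_middle_informative (mx_rsim r (triv_repr gT)) then true else false.

(* multiplicity m(V, W) of the irreducible rV in rW: the multiplicity
   (socle_mult) of the rW-component (isotypic component) whose simple
   modules are isomorphic to rV, 0 if there is none *)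
Definition mult (gT : finGroupType) n (rV : mx_representation algC [set: gT]%G n)
  m (rW : mx_representation algC [set: gT]%G m) : nat :=
  let sW := DecSocleType rW in
  (\sum_(W : sW)
     if excluded_middle_informative (mx_rsim (socle_repr W) rV)
     then socle_mult W else 0)%N.

(* unitary representation = matrices in an orthonormal basis of a G-invariant
   inner product *)
Definition conjT n (M : 'M[algC]_n) : 'M[algC]_n := (map_mx Num.conj M)^T.
Definition unitary_repr (gT : finGroupType) n (r : mx_representation algC [set: gT]%G n) :=
  forall g : gT, r g *m conjT (r g) = 1%:M.

Definition fourier (gT : finGroupType) n (Q : gT -> algC)
  (r : mx_representation algC [set: gT]%G n) : 'M[algC]_n := \sum_(g : gT) Q g *: r g.
Definition frob2 n (M : 'M[algC]_n) : algC := \tr (M *m conjT M).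

From HB Require Import structures.
From mathcomp Require Import all_boot all_order all_fingroup all_algebra all_solvable all_field all_character.
From mathcomp Require Import ring.
From Stdlib Require Import ClassicalEpsilon.
Set Implicit Arguments. Unset Strict Implicit. Unset Printing Implicit Defensive.
Import Order.TTheory GRing.Theory Num.Theory.
Local Open Scope ring_scope.

(* Write P_r := q^N . e_r.  Both the weighted sum \sum_j m(V_j, CX) ||Q^(rho_j)^N||_Fb^2
   and \sum_r ||P_r||_2^2 expand to \sum_(g,h) q^N(g) conj(q^N(h)) chi(h^-1 g), where chi is
   the permutation character of CX: for a unitary rho_j, ||Q^(rho_j)^N||_Fb^2 is such a
   sum for the character of rho_j, chi = \sum_j m(V_j, CX) chi_j, and chi(g) counts the
   fixed points of g.  By Burnside's lemma the trivial representation occurs exactly once in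
   the transitive permutation module CX, where it contributes 1, so the sum over the
   nontrivial V_j equals \sum_r ||P_r - u||_2^2.  Cauchy-Schwarz and ||.||_2 <= ||.||_1
   compare ||P_r - u||_TV^2 with ||P_r - u||_2^2 up to the factors |X|/4 and 1/4, and
   choosing r (resp. s) with a below-average (resp. above-average) L2 distance concludes. *)

Section GroupAlgebra.

Variable gT : finGroupType.
Implicit Types a b c : gT -> algC.

Lemma sum_ga_one : \sum_(g : gT) @ga_one gT g = 1.
Proof. by rewrite (bigD1 1%g) //= /ga_one eqxx big1 ?addr0 // => g /negbTE ->. Qed.

Lemma sum_ga_mul a b : \sum_k ga_mul a b k = (\sum_g a g) * (\sum_h b h).
Proof.
rewrite /ga_mul exchange_big /= mulr_suml; apply: eq_bigr => g _.
rewrite exchange_big mulr_sumr /=; apply: eq_bigr => h _.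
by rewrite (bigD1 (g * h)%g) //= eqxx big1 ?addr0 // => k /negbTE; rewrite eq_sym => ->.
Qed.

Lemma sum_ga_pow a N : \sum_g a g = 1 -> \sum_g ga_pow a N g = 1.
Proof.
move=> a1; elim: N => [|N IH] /=; first exact: sum_ga_one.
by rewrite sum_ga_mul IH a1 mulr1.
Qed.

Section Fourier.

Variables (n : nat) (r : mx_representation algC [set: gT]%G n).

Lemma fourier_ga_one : fourier (@ga_one gT) r = 1%:M.
Proof.
rewrite /fourier (bigD1 1%g) //= /ga_one eqxx scale1r repr_mx1 big1 ?addr0 //.
by move=> g /negbTE ->; rewrite scale0r.
Qed.

Lemma fourier_ga_mul a b : fourier (ga_mul a b) r = fourier a r *m fourier b r.
Proof.
have -> : fourier a r *m fourier b r = \sum_g \sum_h (a g * b h) *: r (g * h)%g.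
  rewrite mulmx_suml; apply: eq_bigr => g _; rewrite mulmx_sumr; apply: eq_bigr => h _.
  by rewrite -scalemxAl -scalemxAr scalerA -repr_mxM ?inE.
rewrite /fourier /ga_mul; under eq_bigr do rewrite scaler_suml.
rewrite exchange_big /=; apply: eq_bigr => g _.
under eq_bigr do rewrite scaler_suml.
rewrite exchange_big /=; apply: eq_bigr => h _.
rewrite (bigD1 (g * h)%g) //= eqxx big1 ?addr0 //.
by move=> k /negbTE; rewrite eq_sym => ->; rewrite scale0r.
Qed.

Lemma fourier_ga_pow a N : fourier (ga_pow a N) r = fourier a r ^+ N.
Proof.
elim: N => [|N IH] /=; first by rewrite fourier_ga_one idmxE.
by rewrite fourier_ga_mul IH exprSr mulmxE.
Qed.

Lemma conjT_fourier c : conjT (fourier c r) = \sum_g (c g)^* *: conjT (r g).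
Proof.
apply/matrixP => i j; rewrite !mxE summxE rmorph_sum summxE.
by apply: eq_bigr => g _; rewrite !mxE rmorphM.
Qed.

Hypothesis r_unitary : unitary_repr r.

Lemma conjT_repr g : conjT (r g) = r g^-1%g.
Proof.
have := congr1 (mulmx (r g^-1)%g) (r_unitary g).
by rewrite mulmx1 mulmxA -repr_mxM ?inE // mulVg repr_mx1 mul1mx.
Qed.

Lemma frob2_fourier c :
  frob2 (fourier c r) = \sum_g \sum_h c g * (c h)^* * \tr (r (h^-1 * g)%g).
Proof.
rewrite /frob2 conjT_fourier mulmx_suml linear_sum /=; apply: eq_bigr => g _.
rewrite mulmx_sumr linear_sum /=; apply: eq_bigr => h _.
rewrite conjT_repr -scalemxAl -scalemxAr !linearZ /= mulrA.
by rewrite mxtrace_mulC -repr_mxM ?inE.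
Qed.

End Fourier.

End GroupAlgebra.

Section Characters.

Variable gT : finGroupType.

Lemma mxtrace_cfRepr n (r : mx_representation algC [set: gT]%G n) g :
  \tr (r g) = cfRepr r g.
Proof. by rewrite cfunE inE mulr1n. Qed.

Lemma is_trivP n (r : mx_representation algC [set: gT]%G n) :
  reflect (mx_rsim r (triv_repr gT)) (is_triv r).
Proof. by rewrite /is_triv; case: excluded_middle_informative => h; constructor. Qed.

Lemma cfRepr_triv : cfRepr (triv_repr gT) = 1.
Proof. by apply/cfun_inP=> x Gx; rewrite cfunE cfun1E Gx /= mxtrace1. Qed.

Lemma mxtrace_triv n (r : mx_representation algC [set: gT]%G n) g :
  is_triv r -> \tr (r g) = 1.
Proof.
by move/is_trivP=> rs; rewrite mxtrace_cfRepr (cfRepr_sim rs) cfRepr_triv cfun1E inE.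
Qed.

Lemma frob2_fourier_triv n (r : mx_representation algC [set: gT]%G n) (c : gT -> algC) :
  unitary_repr r -> is_triv r ->
  frob2 (fourier c r) = (\sum_(g : gT) c g) * (\sum_(g : gT) c g)^*.
Proof.
move=> r_unitary r_triv; rewrite frob2_fourier // rmorph_sum mulr_suml.
apply: eq_bigr => g _; rewrite mulr_sumr; apply: eq_bigr => h _.
by rewrite mxtrace_triv // mulr1.
Qed.

Lemma sum_mxtrace_irr n (r : mx_representation algC [set: gT]%G n) :
  mx_irreducible r -> \sum_g \tr (r g) = if is_triv r then #|gT|%:R else 0.
Proof.
move=> irr_r; case: ifP => [tr | /negbT ntr].
  by rewrite (eq_bigr (fun _ => 1)) ?sumr_const // => g _; rewrite mxtrace_triv.
have /irrP [i chi_i] : cfRepr r \in irr [set: gT]%G.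
  by apply/irr_reprP; exists (Representation r).
have i_neq0 : i != 0.
  apply: contraNneq ntr => i0; apply/is_trivP/cfRepr_inj.
  by rewrite chi_i i0 irr0 cfRepr_triv.
have := cfdot_irr i 0; rewrite (negbTE i_neq0) irr0 cfdotE -chi_i => /eqP.
rewrite mulf_eq0 invr_eq0 pnatr_eq0 -[(#|_| == 0%N)]negbK -lt0n cardG_gt0 /= => /eqP sum0.
rewrite -[RHS]sum0; apply: eq_big => [g | g _]; first by rewrite inE.
by rewrite mxtrace_cfRepr cfun1E inE conjC1 mulr1.
Qed.

Lemma mxtrace_socle_sum (G : {group gT}) n (rG : mx_representation algC G n) x :
  x \in G -> \tr (rG x) = \sum_(W : DecSocleType rG) \tr (socle_repr W x) *+ socle_mult W.
Proof.
move=> Gx; set sG := DecSocleType rG.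
have S1 : Socle sG = 1%:M := reducible_Socle1 sG (mx_Maschke_pchar rG (algC'G_pchar G)).
rewrite -(mxtrace_Socle sG Gx); apply: mxtrace_rsim Gx.
by apply: mx_rsim_sym; apply: rsim_submod1; rewrite S1.
Qed.

End Characters.

Section Multiplicities.

Variables (gT : finGroupType) (k : nat) (d : 'I_k -> nat).
Variable rho : forall j : 'I_k, mx_representation algC [set: gT]%G (d j).
Hypothesis rho_noniso : forall i j, mx_rsim (rho i) (rho j) -> i = j.
Hypothesis rho_all : forall n (r : mx_representation algC [set: gT]%G n),
  mx_irreducible r -> exists j, mx_rsim r (rho j).

Lemma sum_mult_mxtrace m (rW : mx_representation algC [set: gT]%G m) x :
  \sum_j (mult (rho j) rW)%:R * \tr (rho j x) = \tr (rW x).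
Proof.
rewrite (@mxtrace_socle_sum _ _ _ rW x (in_setT x)) /mult.
under eq_bigr do rewrite natr_sum mulr_suml.
rewrite exchange_big /=; apply: eq_bigr => W _.
have [j rj] := rho_all (socle_irr W).
rewrite (bigD1 j) //= big1 ?addr0.
  destruct excluded_middle_informative as [? | nrj]; last by case: nrj.
  by rewrite mulr_natl (mxtrace_rsim rj (in_setT x)).
move=> i ij; destruct excluded_middle_informative as [ri | nri]; last by rewrite mul0r.
by case/eqP: ij; apply: rho_noniso; apply: mx_rsim_trans (mx_rsim_sym ri) rj.
Qed.

Hypothesis rho_irr : forall j, mx_irreducible (rho j).

Lemma sum_mxtrace_mult_triv m (rW : mx_representation algC [set: gT]%G m) :
  \sum_x \tr (rW x) = (\sum_(j | is_triv (rho j)) (mult (rho j) rW)%:R) * #|gT|%:R.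
Proof.
under eq_bigr do rewrite -sum_mult_mxtrace.
rewrite exchange_big /= (bigID (fun j => is_triv (rho j))) /= [X in _ + X]big1 ?addr0.
  by rewrite mulr_suml; apply: eq_bigr => j tj; rewrite -mulr_sumr sum_mxtrace_irr // tj.
by move=> j ntj; rewrite -mulr_sumr sum_mxtrace_irr // (negbTE ntj) mulr0.
Qed.

End Multiplicities.

Section Action.

Variables (gT : finGroupType) (X : finType) (A : lact gT X).
Implicit Types R : gT -> algC.

Lemma lactVK g x : A g^-1%g (A g x) = x.
Proof. by rewrite -lactM mulVg lact1. Qed.

Lemma eq_lact_fix g h x : (A g x == A h x) = (A (h^-1 * g)%g x == x).
Proof.
apply/eqP/eqP => e; first by rewrite lactM e lactVK.
by rewrite -[in RHS]e -lactM mulgA mulgV mul1g.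
Qed.

Lemma mxtrace_perm_repr g : \tr (perm_repr A g) = \sum_(x : X) (A g x == x)%:R.
Proof.
rewrite /mxtrace (big_enum_val (fun x : X => (A g x == x)%:R)) /=.
by apply: eq_bigr => i _; rewrite mxE.
Qed.

Lemma ga_act_basisE R r y : ga_act A R (cx_basis r) y = \sum_g R g * (A g r == y)%:R.
Proof.
apply: eq_bigr => g _; rewrite (bigD1 r) //= /cx_basis eqxx mulr1 big1 ?addr0.
  by rewrite mulr_natr.
by move=> x /negbTE ->; rewrite mulr0 mul0rn.
Qed.

Lemma sum_ga_act_basis R r : \sum_g R g = 1 -> \sum_y ga_act A R (cx_basis r) y = 1.
Proof.
move=> R1; under eq_bigr do rewrite ga_act_basisE.
rewrite exchange_big /= -[RHS]R1; apply: eq_bigr => g _.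
rewrite (bigD1 (A g r)) //= eqxx mulr1 big1 ?addr0 //.
by move=> y /negbTE; rewrite eq_sym => ->; rewrite mulr0.
Qed.

Lemma sum_ga_act_basis_sqr R :
  \sum_r \sum_y ga_act A R (cx_basis r) y * (ga_act A R (cx_basis r) y)^* =
  \sum_g \sum_h R g * (R h)^* * \sum_(x : X) (A (h^-1 * g)%g x == x)%:R.
Proof.
under eq_bigr => r _ do under eq_bigr => y _ do
  rewrite !ga_act_basisE rmorph_sum mulr_suml.
under eq_bigr => r _ do rewrite exchange_big /=.
rewrite exchange_big /=; apply: eq_bigr => g _.
under eq_bigr => r _ do under eq_bigr => y _ do rewrite mulr_sumr.
under eq_bigr => r _ do rewrite exchange_big /=.
rewrite exchange_big /=; apply: eq_bigr => h _.
rewrite mulr_sumr; apply: eq_bigr => x _.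
rewrite (bigD1 (A g x)) //= big1 ?addr0.
  rewrite eqxx rmorphM /= conjC_nat eq_sym eq_lact_fix.
  by case: (_ == _); rewrite ?mulr1 ?mulr0.
by move=> y /negbTE; rewrite eq_sym => ->; rewrite mulr0 mul0r.
Qed.

Hypothesis A_trans : lact_transitive A.

Lemma card_orbit_stab x : #|X|%:R * \sum_(g : gT) ((A g x == x)%:R : algC) = #|gT|%:R.
Proof.
have -> : (#|gT|%:R : algC) = \sum_(y : X) \sum_(g : gT) (A g x == y)%:R.
  rewrite exchange_big /= -sum1_card natr_sum; apply: eq_bigr => g _.
  by rewrite (bigD1 (A g x)) //= eqxx big1 ?addr0 // => y /negbTE; rewrite eq_sym => ->.
rewrite mulr_natl -sumr_const; apply: eq_bigr => y _.
have [h <-] := A_trans x y.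
rewrite [RHS](reindex_inj (mulgI h)) /=; apply: eq_bigr => g _.
by rewrite lactM (inj_eq (can_inj (lactVK h))).
Qed.

Lemma burnside_transitive : (0 < #|X|)%N ->
  \sum_(g : gT) \sum_(x : X) ((A g x == x)%:R : algC) = #|gT|%:R.
Proof.
move=> X_gt0; have X_neq0 : (#|X|%:R : algC) != 0 by rewrite pnatr_eq0 -lt0n.
apply: (mulfI X_neq0); rewrite exchange_big /= mulr_sumr.
rewrite (eq_bigr (fun _ => #|gT|%:R)) => [|x _]; last exact: card_orbit_stab.
by rewrite sumr_const mulr_natl.
Qed.

End Action.

Lemma sumr_const_card (V : nmodType) (X : finType) (c : V) : \sum_(x : X) c = c *+ #|X|.
Proof. exact: sumr_const. Qed.

Section NormComparison.

Variable X : finType.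
Implicit Types u f : X -> algC.

Lemma sum_sqr_le_sqr_sum u : (forall y, 0 <= u y) -> \sum_y u y ^+ 2 <= (\sum_y u y) ^+ 2.
Proof.
move=> u_ge0; rewrite [leRHS]expr2 mulr_suml; apply: ler_sum => y _.
by rewrite expr2 ler_wpM2l // (bigD1 y) //= lerDl sumr_ge0.
Qed.

Lemma sqr_sum_le_card_sum_sqr u :
  (forall y, u y \is Num.real) -> (\sum_y u y) ^+ 2 <= #|X|%:R * \sum_y u y ^+ 2.
Proof.
move=> u_real; set S2 := #|X|%:R * _.
have : 0 <= \sum_y \sum_z (u y - u z) ^+ 2.
  apply: sumr_ge0 => y _; apply: sumr_ge0 => z _.
  by rewrite -realEsqr; apply: realB.
have sum_sqr_l : \sum_(y : X) \sum_(z : X) u y ^+ 2 = S2.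
  by rewrite /S2 mulr_sumr; apply: eq_bigr => y _; rewrite sumr_const_card mulr_natl.
have sum_sqr_r : \sum_(y : X) \sum_(z : X) u z ^+ 2 = S2.
  by rewrite sumr_const_card /S2 mulr_natl.
have sum_mul : \sum_(y : X) \sum_(z : X) u y * u z = (\sum_y u y) ^+ 2.
  by rewrite expr2 mulr_suml; apply: eq_bigr => y _; rewrite mulr_sumr.
under eq_bigr do under eq_bigr do rewrite sqrrB.
under eq_bigr do rewrite big_split sumrB sumrMnl.
rewrite big_split sumrB sumrMnl sum_sqr_l sum_sqr_r sum_mul.
by rewrite /= addrAC -mulr2n -mulrnBl pmulrn_lge0 // subr_ge0.
Qed.

Lemma exists_le_mean (a : X -> algC) : (0 < #|X|)%N -> (forall x, a x \is Num.real) ->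
  exists r, #|X|%:R * a r <= \sum_x a x.
Proof.
move=> X_gt0 a_real; have [x0 _] := card_gt0P X_gt0.
have [/existsP // | /existsPn gt_mean] := boolP [exists r, #|X|%:R * a r <= \sum_x a x].
have : \sum_(r : X) \sum_x a x < \sum_(r : X) #|X|%:R * a r.
  apply: ltr_sum => [|r _]; first by apply/hasP; exists x0; rewrite ?mem_index_enum.
  rewrite real_ltNge ?gt_mean ?realM ?realn ?a_real //.
  by apply: rpred_sum => ? _.
by rewrite -mulr_sumr sumr_const_card mulr_natl ltxx.
Qed.

Lemma exists_ge_mean (a : X -> algC) : (0 < #|X|)%N -> (forall x, a x \is Num.real) ->
  exists s, \sum_x a x <= #|X|%:R * a s.
Proof.
move=> X_gt0 a_real.
have [s] : exists s, #|X|%:R * - a s <= \sum_x - a x.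
  by apply: exists_le_mean => // x; rewrite realN.
by rewrite mulrN sumrN lerN2; exists s.
Qed.

Lemma tv_norm_sqrE f : tv_norm f ^+ 2 = 4^-1 * (\sum_y `|f y|) ^+ 2.
Proof. by rewrite exprMn exprVn -natrX. Qed.

Lemma sum_sqr_dev_unif (P : X -> algC) : (0 < #|X|)%N -> \sum_y P y = 1 ->
  \sum_y `|cx_sub P (@cx_unif X) y| ^+ 2 = \sum_y P y * (P y)^* - #|X|%:R^-1.
Proof.
move=> X_gt0 P1; set c := #|X|%:R^-1.
have c_real : c^* = c by apply/CrealP; rewrite realV realn.
have cX : c *+ #|X| = 1 by rewrite -mulr_natr mulVf // pnatr_eq0 -lt0n.
have sqr_dev y : `|P y - c| ^+ 2 = P y * (P y)^* - (c * (P y)^* + c * P y) + c * c.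
  by rewrite normCK rmorphB /= c_real; ring.
rewrite /cx_sub /cx_unif -/c; under eq_bigr do rewrite sqr_dev.
rewrite big_split sumrB big_split /= -!mulr_sumr -rmorph_sum P1 rmorph1.
rewrite sumr_const_card cX; ring.
Qed.

Lemma exists_tv_norm_sqr_bounds (f : X -> X -> algC) : (0 < #|X|)%N ->
  let S := \sum_r \sum_y `|f r y| ^+ 2 in
  (exists r, tv_norm (f r) ^+ 2 <= 4^-1 * S) /\
  (exists s, (4 * #|X|%:R)^-1 * S <= tv_norm (f s) ^+ 2).
Proof.
move=> X_gt0 S; have X_neq0 : (#|X|%:R : algC) != 0 by rewrite pnatr_eq0 -lt0n.
have a_real r : \sum_y `|f r y| ^+ 2 \is Num.real.
  by apply: ger0_real; apply: sumr_ge0 => y _; apply: exprn_ge0.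
split.
  have [r le_r] := exists_le_mean X_gt0 a_real.
  exists r; rewrite tv_norm_sqrE ler_wpM2l ?invr_ge0 ?ler0n //.
  by apply: le_trans le_r; apply: sqr_sum_le_card_sum_sqr => y; apply: normr_real.
have [s ge_s] := exists_ge_mean X_gt0 a_real.
exists s; apply: (@le_trans _ _ ((4 * #|X|%:R)^-1 * (#|X|%:R * \sum_y `|f s y| ^+ 2))).
  by rewrite ler_wpM2l ?invr_ge0 ?mulr_ge0 ?ler0n.
rewrite invfM -mulrA mulKf // tv_norm_sqrE ler_wpM2l ?invr_ge0 ?ler0n //.
by apply: sum_sqr_le_sqr_sum => y; apply: normr_ge0.
Qed.

End NormComparison.

Section Plancherel.

Variables (gT : finGroupType) (k : nat) (d : 'I_k -> nat).
Variable rho : forall j : 'I_k, mx_representation algC [set: gT]%G (d j).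
Hypothesis rho_unitary : forall j, unitary_repr (rho j).
Hypothesis rho_irr : forall j, mx_irreducible (rho j).
Hypothesis rho_noniso : forall i j, mx_rsim (rho i) (rho j) -> i = j.
Hypothesis rho_all : forall n (r : mx_representation algC [set: gT]%G n),
  mx_irreducible r -> exists j, mx_rsim r (rho j).
Variables (X : finType) (A : lact gT X).
Hypothesis X_gt0 : (0 < #|X|)%N.
Hypothesis A_trans : lact_transitive A.

Local Notation m j := ((mult (rho j) (perm_repr A))%:R : algC).

Lemma sum_mult_triv_perm_repr : \sum_(j | is_triv (rho j)) m j = 1.
Proof.
have G_neq0 : (#|gT|%:R : algC) != 0.
  by rewrite pnatr_eq0 -lt0n; apply/card_gt0P; exists 1%g.
apply: (mulIf G_neq0); rewrite mul1r -sum_mxtrace_mult_triv //.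
by under eq_bigr do rewrite mxtrace_perm_repr; apply: burnside_transitive.
Qed.

Lemma sum_mult_frob2_fourier (R : gT -> algC) :
  \sum_j m j * frob2 (fourier R (rho j)) =
  \sum_r \sum_y ga_act A R (cx_basis r) y * (ga_act A R (cx_basis r) y)^*.
Proof.
rewrite sum_ga_act_basis_sqr; under eq_bigr do rewrite frob2_fourier // mulr_sumr.
rewrite exchange_big /=; apply: eq_bigr => g _.
under eq_bigr do rewrite mulr_sumr.
rewrite exchange_big /=; apply: eq_bigr => h _.
rewrite -mxtrace_perm_repr -(sum_mult_mxtrace rho_noniso rho_all) mulr_sumr.
by apply: eq_bigr => j _; rewrite mulrCA.
Qed.

Lemma sum_nontriv_mult_frob2_fourier (R : gT -> algC) : \sum_(g : gT) R g = 1 ->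
  \sum_(j | ~~ is_triv (rho j)) m j * frob2 (fourier R (rho j)) =
  \sum_r \sum_y `|cx_sub (ga_act A R (cx_basis r)) (@cx_unif X) y| ^+ 2.
Proof.
move=> R1; under [RHS]eq_bigr do rewrite sum_sqr_dev_unif ?sum_ga_act_basis //.
rewrite sumrB -sum_mult_frob2_fourier [in RHS](bigID (fun j => is_triv (rho j))) /=.
rewrite [X in X + _ - _](eq_bigr (fun j => m j)) => [|j j_triv]; last first.
  by rewrite frob2_fourier_triv // R1 rmorph1 !mulr1.
rewrite sum_mult_triv_perm_repr sumr_const_card -[_ *+ #|X|]mulr_natl.
rewrite mulfV ?[1 + _]addrC ?addrK //.
by rewrite pnatr_eq0 -lt0n.
Qed.

End Plancherel.

Theorem corollary1p2 (gT : finGroupType) (k : nat) (d : 'I_k -> nat)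
  (rho : forall j : 'I_k, mx_representation algC [set: gT]%G (d j))
  (rho_unitary : forall j, unitary_repr (rho j))
  (rho_irr : forall j, mx_irreducible (rho j))
  (rho_noniso : forall i j, mx_rsim (rho i) (rho j) -> i = j)
  (rho_all : forall n (r : mx_representation algC [set: gT]%G n),
      mx_irreducible r -> exists j, mx_rsim r (rho j))
  (X : finType) (X_nonempty : (0 < #|X|)%N) (A : lact gT X) (A_trans : lact_transitive A)
  (Q : gT -> algC) (Q_ge0 : forall g, 0 <= Q g) (Q_sum1 : \sum_(g : gT) Q g = 1)
  (N : nat) (N_pos : (0 < N)%N) :
  let S := \sum_(j < k | ~~ is_triv (rho j))
             (mult (rho j) (perm_repr A))%:R * frob2 (fourier Q (rho j) ^+ N) in
  (exists r : X,
     tv_norm (cx_sub (ga_act A (ga_pow Q N) (cx_basis r)) (@cx_unif X)) ^+ 2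
       <= 4^-1 * S)
  /\
  (exists s : X,
     tv_norm (cx_sub (ga_act A (ga_pow Q N) (cx_basis s)) (@cx_unif X)) ^+ 2
       >= (4 * #|X|%:R)^-1 * S).
Proof.
move=> S.
have -> : S = \sum_r \sum_y
    `|cx_sub (ga_act A (ga_pow Q N) (cx_basis r)) (@cx_unif X) y| ^+ 2.
  rewrite /S; under eq_bigr do rewrite -fourier_ga_pow.
  exact: sum_nontriv_mult_frob2_fourier (sum_ga_pow N Q_sum1).
exact: exists_tv_norm_sqr_bounds.
Qed.
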